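(* Let $A$ be a partially ordered set with top and bottom elements, and let $G$ be a game over $A$ that has a canonical form (i.e., there is a game in canonical form equivalent to $G$). Then $G$ is equivalent to a monotone game if and only if the canonical form of $G$ is passable.
   Context: Games over a poset $A$ are defined inductively: for each $a\in A$ there is an atomic game $[a]$, which has no options; and if $L$ and $R$ are non-empty sets of games, then $\{L\mid R\}$ is a composite game with left options $L$ and right options $R$. The relations $\le$ and $\lhd$ are defined by simultaneous recursion: $G\le H$ iff (1) every left option $G^L$ of $G$ satisfies $G^L\lhd H$, (2) every right option $H^R$ of $H$ satisfies $G\lhd H^R$, and (3) if $G$ or $H$ is atomic then $G\lhd H$; and $G\lhd H$ iff (1) some right option $G^R$ of $G$ satisfies $G^R\le H$, or (2) some left option $H^L$ of $H$ satisfies $G\le H^L$, or (3) $G=[a]$, $H=[b]$ are atomic and $a\le b$. $G\equiv H$ means $G\le H$ and $H\le G$. A game $G$ is passable if $G\lhd G$ and recursively all its options are passable. A left option $G^L$ is good if $G\le G^L$, a right option $G^R$ is good if $G^R\le G$; a game is monotone if all its options are good and recursively all its options are monotone. Canonical form: among distinct left options $H,K$ of $G$, $K$ is dominated if $K\le H$; among distinct right options $H,K$, $K$ is dominated if $H\le K$. A left option $H$ of $G$ is reversible if $H$ has a right option $K$ with $K\le G$; a right option $H$ of $G$ is reversible if $H$ has a left option $K$ with $G\le K$. An option $H$ of $G$ is a passing option if $H\equiv G$. $G$ is in canonical form if it has no dominated, reversible or passing options and all its options are in canonical form. Two equivalent games in canonical form are equal; ''the canonical form of $G$'' is the unique game in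 canonical form equivalent to $G$. *)

From mathcomp Require Import all_boot all_order.
Set Implicit Arguments. Unset Strict Implicit. Unset Printing Implicit Defensive.

Section Games.
Variable (A : Type).

(* Games over A.  A composite game {L | R} has non-empty families of left and
   right options, indexed by arbitrary (inhabited) types: the option "sets"
   are the images of the families. *)
Inductive game : Type :=
| Atom : A -> game
| Comp : forall (I J : Type), inhabited I -> inhabited J ->
           (I -> game) -> (J -> game) -> game.

Definition is_atom (G : game) : Prop :=
  match G with Atom _ => True | Comp _ _ _ _ _ _ => False end.

Definition left_opt (G K : game) : Prop :=
  match G with Atom _ => False | Comp _ _ _ _ L _ => exists i, L i = K end.

Definition right_opt (G K : game) : Prop :=
  match G with Atom _ => False | Comp _ _ _ _ _ R => exists j, R j = K end.

Definition opt (G K : game) : Prop := left_opt G K \/ right_opt G K.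

(* Equality of games as sets (extensional equality of option sets). *)
Inductive game_eq : game -> game -> Prop :=
| game_eq_atom a : game_eq (Atom a) (Atom a)
| game_eq_comp G H :
    ~ is_atom G -> ~ is_atom H ->
    (forall K, left_opt G K -> exists K', left_opt H K' /\ game_eq K K') ->
    (forall K', left_opt H K' -> exists K, left_opt G K /\ game_eq K K') ->
    (forall K, right_opt G K -> exists K', right_opt H K' /\ game_eq K K') ->
    (forall K', right_opt H K' -> exists K, right_opt G K /\ game_eq K K') ->
    game_eq G H.
End Games.

Arguments Atom {A}.

Section Order.
Variables (disp : Order.disp_t) (A : porderType disp).
Local Notation game := (game A).

Inductive game_le : game -> game -> Prop :=
| game_le_intro G H :
    (forall GL, left_opt G GL -> game_lf GL H) ->
    (forall HR, right_opt H HR -> game_lf G HR) ->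
    ((is_atom G \/ is_atom H) -> game_lf G H) ->
    game_le G H
with game_lf : game -> game -> Prop :=
| game_lf_right G H GR : right_opt G GR -> game_le GR H -> game_lf G H
| game_lf_left G H HL : left_opt H HL -> game_le G HL -> game_lf G H
| game_lf_atom (a b : A) : (a <= b)%O -> game_lf (Atom a) (Atom b).

Definition game_equiv (G H : game) : Prop := game_le G H /\ game_le H G.

Inductive passable : game -> Prop :=
| passable_intro G :
    game_lf G G -> (forall K, opt G K -> passable K) -> passable G.

Inductive monotone : game -> Prop :=
| monotone_intro G :
    (forall K, left_opt G K -> game_le G K) ->
    (forall K, right_opt G K -> game_le K G) ->
    (forall K, opt G K -> monotone K) -> monotone G.

Inductive canonical : game -> Prop :=
| canonical_intro G :
    (forall H K, left_opt G H -> left_opt G K -> ~ game_eq H K -> ~ game_le K H) ->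
    (forall H K, right_opt G H -> right_opt G K -> ~ game_eq H K -> ~ game_le H K) ->
    (forall H K, left_opt G H -> right_opt H K -> ~ game_le K G) ->
    (forall H K, right_opt G H -> left_opt H K -> ~ game_le G K) ->
    (forall H, opt G H -> ~ game_equiv H G) ->
    (forall H, opt G H -> canonical H) ->
    canonical G.
End Order.

(* If C is equivalent to a monotone game M, then C <| C, since C <= M <| M <= C.
   If moreover C is canonical, chasing an option K of C through the options of
   M ends, because C has no dominated and no reversible options, at a
   subposition of M equivalent to K; so the options of C are again canonical
   and equivalent to monotone games, and C is passable by induction.
   Conversely, let C = {L | R} be passable.  By induction its options are
   equivalent to monotone games ML, MR, and a witness of C <| C provides
   monotone P, Q with P <= C <| P and Q <| C <= Q.  Nesting ML, MR, P and Q
   under the extremal atoms packs them into a monotone game with a single left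
   and a single right option which is equivalent to C. *)

From mathcomp Require Import all_boot all_order.
From Stdlib Require Import Classical IndefiniteDescription.
Import Order.Theory.
Set Implicit Arguments. Unset Strict Implicit. Unset Printing Implicit Defensive.

Section GameOrder.
Variables (disp : Order.disp_t) (A : porderType disp).
Local Notation game := (game A).
Local Notation le := (@game_le disp A).
Local Notation lf := (@game_lf disp A).
Local Notation equiv := (@game_equiv disp A).
Local Notation monotone := (@monotone disp A).
Local Notation passable := (@passable disp A).
Local Notation canonical := (@canonical disp A).

Lemma game_leE G H : le G H ->
  [/\ forall GL, left_opt G GL -> lf GL H,
      forall HR, right_opt H HR -> lf G HR &
      is_atom G \/ is_atom H -> lf G H].
Proof. by case. Qed.

Lemma game_lfE G H : lf G H ->
  [\/ exists2 GR, right_opt G GR & le GR H,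
      exists2 HL, left_opt H HL & le G HL |
      exists a b, [/\ G = Atom a, H = Atom b & (a <= b)%O]].
Proof.
case=> [{}G {}H GR | {}G {}H HL | a b ab]; last by constructor 3; exists a, b.
- by move=> GGR GRH; constructor 1; exists GR.
- by move=> HHL GHL; constructor 2; exists HL.
Qed.

Lemma wf_opt : well_founded (fun K G : game => opt G K).
Proof.
elim=> [a | I J hI hJ L IHL R IHR]; constructor; first by move=> K [[] | []].
by move=> K [[i <-] | [j <-]].
Qed.

Lemma atom_le a b : (a <= b)%O -> le (Atom a) (Atom b).
Proof. by move=> ab; constructor=> [_ [] | _ [] | _]; apply: game_lf_atom. Qed.

Lemma game_le_refl G : le G G.
Proof.
elim: G => [a | I J hI hJ L IHL R IHR]; first exact: atom_le.
constructor=> [_ [i <-] | _ [j <-] | [] []].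
- by apply: (game_lf_left (HL := L i)); first exists i.
- by apply: (game_lf_right (GR := R j)); first exists j.
Qed.

(* The three laws are proved together: each case of one of them uses the
   others at smaller positions. *)
Record transitive_at (x y z : game) : Prop := TransitiveAt {
  le_le_at : le x y -> le y z -> le x z;
  lf_le_at : lf x y -> le y z -> lf x z;
  le_lf_at : le x y -> lf y z -> lf x z }.

Lemma transitive_at_all x y z : transitive_at x y z.
Proof.
move: y z; elim/(well_founded_ind wf_opt): x => x IHx y.
elim/(well_founded_ind wf_opt): y => y IHy z.
elim/(well_founded_ind wf_opt): z => z IHz.
have lf_le : lf x y -> le y z -> lf x z.
  move=> xy yz; have [yLz _ yz_atom] := game_leE yz.
  case/game_lfE: xy => [[xR xxR xRy] | [yL yyL xyL] | [a [b [xa yb ab]]]].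
  - exact: game_lf_right xxR (le_le_at (IHx _ (or_intror xxR) y z) xRy yz).
  - exact: le_lf_at (IHy _ (or_introl yyL) z) xyL (yLz _ yyL).
  - have xy : le x y by rewrite xa yb; apply: atom_le.
    rewrite yb in yz_atom.
    case/game_lfE: (yz_atom (or_introl I)) =>
      [[? [] _] | [zL zzL bzL] | [? [c [[<-] zc bc]]]].
    + apply: (game_lf_left zzL).
      by apply: le_le_at (IHz _ (or_introl zzL)) xy _; rewrite yb.
    + by rewrite xa zc; apply/game_lf_atom/(le_trans ab bc).
have le_lf : le x y -> lf y z -> lf x z.
  move=> xy yz; have [_ xyR xy_atom] := game_leE xy.
  case/game_lfE: yz => [[yR yyR yRz] | [zL zzL yzL] | [b [c [yb zc bc]]]].
  - exact: lf_le_at (IHy _ (or_intror yyR) z) (xyR _ yyR) yRz.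
  - by apply: (game_lf_left zzL); apply: le_le_at (IHz _ (or_introl zzL)) _ yzL.
  - have yz : le y z by rewrite yb zc; apply: atom_le.
    rewrite yb in xy_atom.
    case/game_lfE: (xy_atom (or_intror I)) =>
      [[xR xxR xRb] | [? [] _] | [a [? [xa [<-] ab]]]].
    + apply: (game_lf_right xxR).
      by apply: le_le_at (IHx _ (or_intror xxR) y z) _ yz; rewrite yb.
    + by rewrite xa zc; apply/game_lf_atom/(le_trans ab bc).
split=> // xy yz.
have [xLy _ xy_atom] := game_leE xy; have [_ yzR yz_atom] := game_leE yz.
constructor.
- by move=> xL xxL; apply: lf_le_at (IHx _ (or_introl xxL) y z) (xLy _ xxL) yz.
- by move=> zR zzR; apply: le_lf_at (IHz _ (or_intror zzR)) xy (yzR _ zzR).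
- case=> [x_atom | z_atom].
  + exact: lf_le (xy_atom (or_introl x_atom)) yz.
  + exact: le_lf xy (yz_atom (or_intror z_atom)).
Qed.

Lemma game_le_trans y x z : le x y -> le y z -> le x z.
Proof. exact: le_le_at (transitive_at_all x y z). Qed.

Lemma game_lf_le_trans y x z : lf x y -> le y z -> lf x z.
Proof. exact: lf_le_at (transitive_at_all x y z). Qed.

Lemma game_le_lf_trans y x z : le x y -> lf y z -> lf x z.
Proof. exact: le_lf_at (transitive_at_all x y z). Qed.

Lemma game_equiv_refl G : equiv G G.
Proof. by split; apply: game_le_refl. Qed.

Lemma game_equiv_sym G H : equiv G H -> equiv H G.
Proof. by case. Qed.

Lemma game_equiv_trans H G K : equiv G H -> equiv H K -> equiv G K.
Proof.
by move=> [GH HG] [HK KH]; split; [exact: game_le_trans GH HK | exact: game_le_trans KH HG].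
Qed.

Lemma game_eq_equiv G H : game_eq G H -> equiv G H.
Proof.
move: H; elim/(well_founded_ind wf_opt): G => G IH H GH.
case: GH IH => [a _ | {}G {}H Gn Hn LGH LHG RGH RHG IH]; first exact: game_equiv_refl.
split; constructor.
- move=> GL /[dup] GGL /LGH[HL [HHL eqL]].
  exact: game_lf_left HHL (IH _ (or_introl GGL) _ eqL).1.
- move=> HR /RHG[GR [GGR eqR]].
  exact: game_lf_right GGR (IH _ (or_intror GGR) _ eqR).1.
- by case=> [/Gn | /Hn].
- move=> HL /LHG[GL [GGL eqL]].
  exact: game_lf_left GGL (IH _ (or_introl GGL) _ eqL).2.
- move=> GR /[dup] GGR /RGH[HR [HHR eqR]].
  exact: game_lf_right HHR (IH _ (or_intror GGR) _ eqR).2.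
- by case=> [/Hn | /Gn].
Qed.

Lemma monotoneE M : monotone M ->
  [/\ forall K, left_opt M K -> le M K,
      forall K, right_opt M K -> le K M &
      forall K, opt M K -> monotone K].
Proof. by case. Qed.

Lemma monotone_atom a : monotone (Atom a).
Proof. by constructor=> K [] // []. Qed.

Lemma monotone_lf M : monotone M -> lf M M.
Proof.
case: M => [a _ | I J [i] hJ L R /monotoneE[ML _ _]]; first exact: game_lf_atom.
by apply: (game_lf_left (HL := L i)); [exists i | apply: ML; exists i].
Qed.

Definition equiv_monotone G : Prop := exists M, monotone M /\ equiv G M.

Lemma equiv_monotone_equiv G H : equiv G H -> equiv_monotone H -> equiv_monotone G.
Proof.
by move=> GH [M [monoM HM]]; exists M; split; last exact: game_equiv_trans GH HM.
Qed.

(* Starting from K <| M <= C, follow the derivations of <= and <| down the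
   options of M: the only other ways out would make an option of C dominated
   or reversible. *)
Section LeftOption.
Variables (C K : game).
Hypothesis CK : left_opt C K.
Hypothesis undominated :
  forall H K', left_opt C H -> left_opt C K' -> ~ game_eq H K' -> ~ le K' H.
Hypothesis irreversible : forall H K', left_opt C H -> right_opt H K' -> ~ le K' C.

Lemma left_opt_equiv_monotone_rec X : monotone X ->
  (le K X -> lf X C -> equiv_monotone K) /\ (lf K X -> le X C -> equiv_monotone K).
Proof.
elim/(well_founded_ind wf_opt): X => X IH monoX; have [_ _ monoXopt] := monotoneE monoX.
have le_case : le K X -> lf X C -> equiv_monotone K.
  move=> KX; have [_ KXR _] := game_leE KX.
  case/game_lfE => [[XR XXR XRC] | [L LCL XL] | [_ [b [_ Cb _]]]].
  - exact: (IH _ (or_intror XXR) (monoXopt _ (or_intror XXR))).2 (KXR _ XXR) XRC.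
  - have [/game_eq_equiv[LK _] | notLK] := classic (game_eq L K).
      by exists X; split=> //; split=> //; apply: game_le_trans XL LK.
    by case: (undominated LCL CK notLK); apply: game_le_trans KX XL.
  - by move: CK; rewrite Cb.
split=> // KX XC; have [XLC _ XC_atom] := game_leE XC.
case/game_lfE: KX => [[KR KKR KRX] | [XL XXL KXL] | [a [b [Ka Xb ab]]]].
- by case: (irreversible CK KKR); apply: game_le_trans KRX XC.
- exact: (IH _ (or_introl XXL) (monoXopt _ (or_introl XXL))).1 KXL (XLC _ XXL).
- apply: le_case; first by rewrite Ka Xb; apply: atom_le.
  by apply: XC_atom; left; rewrite Xb.
Qed.

Lemma left_opt_equiv_monotone : equiv_monotone C -> equiv_monotone K.
Proof.
move=> [M [monoM [CM MC]]]; have [CLM _ _] := game_leE CM.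
exact: (left_opt_equiv_monotone_rec monoM).2 (CLM _ CK) MC.
Qed.

End LeftOption.

Section RightOption.
Variables (C K : game).
Hypothesis CK : right_opt C K.
Hypothesis undominated :
  forall H K', right_opt C H -> right_opt C K' -> ~ game_eq H K' -> ~ le H K'.
Hypothesis irreversible : forall H K', right_opt C H -> left_opt H K' -> ~ le C K'.

Lemma right_opt_equiv_monotone_rec X : monotone X ->
  (le X K -> lf C X -> equiv_monotone K) /\ (lf X K -> le C X -> equiv_monotone K).
Proof.
elim/(well_founded_ind wf_opt): X => X IH monoX; have [_ _ monoXopt] := monotoneE monoX.
have le_case : le X K -> lf C X -> equiv_monotone K.
  move=> XK; have [XLK _ _] := game_leE XK.
  case/game_lfE => [[R CCR RX] | [XL XXL CXL] | [a [_ [Ca _ _]]]].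
  - have [/game_eq_equiv[_ KR] | notRK] := classic (game_eq R K).
      by exists X; split=> //; split=> //; apply: game_le_trans KR RX.
    by case: (undominated CCR CK notRK); apply: game_le_trans RX XK.
  - exact: (IH _ (or_introl XXL) (monoXopt _ (or_introl XXL))).2 (XLK _ XXL) CXL.
  - by move: CK; rewrite Ca.
split=> // XK CX; have [_ CXR CX_atom] := game_leE CX.
case/game_lfE: XK => [[XR XXR XRK] | [KL KKL XKL] | [a [b [Xa Kb ab]]]].
- exact: (IH _ (or_intror XXR) (monoXopt _ (or_intror XXR))).1 XRK (CXR _ XXR).
- by case: (irreversible CK KKL); apply: game_le_trans CX XKL.
- apply: le_case; first by rewrite Xa Kb; apply: atom_le.
  by apply: CX_atom; right; rewrite Xa.
Qed.

Lemma right_opt_equiv_monotone : equiv_monotone C -> equiv_monotone K.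
Proof.
move=> [M [monoM [CM MC]]]; have [_ MCR _] := game_leE MC.
exact: (right_opt_equiv_monotone_rec monoM).2 (MCR _ CK) CM.
Qed.

End RightOption.

Lemma canonical_equiv_monotone_passable C :
  canonical C -> equiv_monotone C -> passable C.
Proof.
elim=> {}C undomL undomR irrevL irrevR _ _ IH /[dup] monoC [M [monoM [CM MC]]].
constructor.
- exact: game_le_lf_trans CM (game_lf_le_trans (monotone_lf monoM) MC).
- move=> K [CK | CK]; apply: IH; [by left | | by right |].
  + exact: left_opt_equiv_monotone CK undomL irrevL monoC.
  + exact: right_opt_equiv_monotone CK undomR irrevR monoC.
Qed.

End GameOrder.

Section Bottom.
Variables (disp : Order.disp_t) (A : bPOrderType disp).
Local Notation game := (game A).
Local Notation le := (@game_le disp A).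
Local Notation lf := (@game_lf disp A).
Local Notation monotone := (@monotone disp A).
Local Notation bottom := (Atom (\bot : A)%O).

Lemma bottom_le G : le bottom G.
Proof.
suff /proj1 : le bottom G /\ lf bottom G by [].
elim: G => [a | I J [i] hJ L IHL R IHR].
  by split; [apply: atom_le | apply: game_lf_atom]; apply: le0x.
have bot_lf : lf bottom (Comp (inhabits i) hJ L R).
  by apply: (game_lf_left (HL := L i)); [exists i | apply: (IHL i).1].
by split=> //; constructor=> // _ [j <-]; apply: (IHR j).2.
Qed.

Definition below (I : Type) (hI : inhabited I) (P : I -> game) : game :=
  Comp hI (inhabits tt) P (fun _ : unit => bottom).

Definition below1 (Y : game) : game := below (inhabits tt) (fun _ : unit => Y).

Section Below.
Variables (I : Type) (hI : inhabited I) (P : I -> game).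

Lemma below_lf H : lf (below hI P) H.
Proof. by apply: (game_lf_right (GR := bottom)); [exists tt | apply: bottom_le]. Qed.

Lemma below_le H : (forall i, lf (P i) H) -> le (below hI P) H.
Proof.
by move=> PH; constructor=> [_ [i <-] | * | _]; [apply: PH | apply: below_lf ..].
Qed.

Lemma lf_below i H : le H (P i) -> lf H (below hI P).
Proof. by apply: (game_lf_left (HL := P i)); exists i. Qed.

Lemma monotone_below :
  (forall i, monotone (P i)) -> (forall i k, lf (P i) (P k)) -> monotone (below hI P).
Proof.
move=> monoP PP; constructor.
- by move=> _ [i <-]; apply: below_le => k; apply: PP.
- by move=> _ [[] <-]; apply: bottom_le.
- by move=> _ [[i <-] | [[] <-]]; [apply: monoP | apply: monotone_atom].
Qed.

End Below.

Lemma below1_le Y H : lf Y H -> le (below1 Y) H.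
Proof. by move=> YH; apply: below_le. Qed.

Lemma lf_below1 Y H : le H Y -> lf H (below1 Y).
Proof. exact: lf_below. Qed.

Lemma monotone_below1 Y : monotone Y -> monotone (below1 Y).
Proof. by move=> monoY; apply: monotone_below => // *; apply: monotone_lf. Qed.

End Bottom.

Section Top.
Variables (disp : Order.disp_t) (A : tPOrderType disp).
Local Notation game := (game A).
Local Notation le := (@game_le disp A).
Local Notation lf := (@game_lf disp A).
Local Notation monotone := (@monotone disp A).
Local Notation top := (Atom (\top : A)%O).

Lemma le_top G : le G top.
Proof.
suff /proj1 : le G top /\ lf G top by [].
elim: G => [a | I J hI [j] L IHL R IHR].
  by split; [apply: atom_le | apply: game_lf_atom]; apply: lex1.
have lf_top : lf (Comp hI (inhabits j) L R) top.
  by apply: (game_lf_right (GR := R j)); [exists j | apply: (IHR j).1].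
by split=> //; constructor=> // _ [i <-]; apply: (IHL i).2.
Qed.

Definition above (J : Type) (hJ : inhabited J) (Q : J -> game) : game :=
  Comp (inhabits tt) hJ (fun _ : unit => top) Q.

Definition above1 (Y : game) : game := above (inhabits tt) (fun _ : unit => Y).

Section Above.
Variables (J : Type) (hJ : inhabited J) (Q : J -> game).

Lemma lf_above H : lf H (above hJ Q).
Proof. by apply: (game_lf_left (HL := top)); [exists tt | apply: le_top]. Qed.

Lemma le_above H : (forall j, lf H (Q j)) -> le H (above hJ Q).
Proof.
by move=> HQ; constructor=> [* | _ [j <-] | _]; [| apply: HQ |]; apply: lf_above.
Qed.

Lemma above_lf j H : le (Q j) H -> lf (above hJ Q) H.
Proof. by apply: (game_lf_right (GR := Q j)); exists j. Qed.

Lemma monotone_above :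
  (forall j, monotone (Q j)) -> (forall j k, lf (Q j) (Q k)) -> monotone (above hJ Q).
Proof.
move=> monoQ QQ; constructor.
- by move=> _ [[] <-]; apply: le_top.
- by move=> _ [j <-]; apply: le_above => k; apply: QQ.
- by move=> _ [[[] <-] | [j <-]]; [apply: monotone_atom | apply: monoQ].
Qed.

End Above.

Lemma le_above1 Y H : lf H Y -> le H (above1 Y).
Proof. by move=> HY; apply: le_above. Qed.

Lemma above1_lf Y H : le Y H -> lf (above1 Y) H.
Proof. exact: above_lf. Qed.

Lemma monotone_above1 Y : monotone Y -> monotone (above1 Y).
Proof. by move=> monoY; apply: monotone_above => // *; apply: monotone_lf. Qed.

End Top.

Section MonotoneForm.
Variables (disp : Order.disp_t) (A : tbPOrderType disp).
Local Notation game := (game A).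
Local Notation le := (@game_le disp A).
Local Notation lf := (@game_lf disp A).
Local Notation equiv := (@game_equiv disp A).
Local Notation monotone := (@monotone disp A).

Variables (I J : Type) (hI : inhabited I) (hJ : inhabited J).
Variables (L : I -> game) (R : J -> game).
Let C := Comp hI hJ L R.
Variables (ML : I -> game) (MR : J -> game) (P Q : game).
Hypothesis ML_spec : forall i, monotone (ML i) /\ equiv (L i) (ML i).
Hypothesis MR_spec : forall j, monotone (MR j) /\ equiv (R j) (MR j).
Hypotheses (P_mono : monotone P) (PC : le P C) (CP : lf C P).
Hypotheses (Q_mono : monotone Q) (CQ : le C Q) (QC : lf Q C).

(* The left option of this game is <| C, since every ML i <| C and P <= C,
   and it is >= every L i: hence the game is equivalent to C.  Its branch
   through P makes the left option good, because the game is <= C <| P.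
   Dually on the right with Q. *)
Definition monotone_form : game :=
  Comp (inhabits tt) (inhabits tt)
    (fun _ : unit => above1 (below (inhabits None)
       (fun o => if o is Some i then above1 (below1 (ML i)) else above1 P)))
    (fun _ : unit => below1 (above (inhabits None)
       (fun o => if o is Some j then below1 (above1 (MR j)) else below1 Q))).

Lemma monotone_form_le : le monotone_form C.
Proof.
constructor=> [_ [[] <-] | _ [j <-] | [] []].
- apply/above1_lf/below_le => -[i|] /=; apply: above1_lf; last exact: PC.
  apply: below1_le; apply: (game_lf_left (HL := L i)); first by exists i.
  exact: (ML_spec i).2.2.
- apply: (game_lf_right (GR := below1 _)); first by exists tt.
  apply: below1_le; apply: (above_lf _ (j := Some j)).
  exact/below1_le/above1_lf/(MR_spec j).2.2.
Qed.

Lemma le_monotone_form : le C monotone_form.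
Proof.
constructor=> [_ [i <-] | _ [[] <-] | [] []].
- apply: (game_lf_left (HL := above1 _)); first by exists tt.
  apply: le_above1; apply: (lf_below _ (i := Some i)).
  exact/le_above1/lf_below1/(ML_spec i).2.1.
- apply/lf_below1/le_above => -[j|] /=; apply: lf_below1; last exact: CQ.
  apply: le_above1; apply: (game_lf_right (GR := R j)); first by exists j.
  exact: (MR_spec j).2.1.
Qed.

Lemma monotone_form_monotone : monotone monotone_form.
Proof.
constructor=> [_ [[] <-] | _ [[] <-] | _ [[[] <-] | [[] <-]]].
- apply: le_above1; apply: (lf_below _ (i := None)).
  exact/le_above1/(game_le_lf_trans monotone_form_le CP).
- apply: below1_le; apply: (above_lf _ (j := None)).
  exact/below1_le/(game_lf_le_trans QC le_monotone_form).
- apply/monotone_above1/monotone_below => [[i|] | ? [?|]] /=; try exact: lf_above.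
  + exact/monotone_above1/monotone_below1/(ML_spec i).1.
  + exact: monotone_above1.
- apply/monotone_below1/monotone_above => [[j|] | [?|] ?] /=; try exact: below_lf.
  + exact/monotone_below1/monotone_above1/(MR_spec j).1.
  + exact: monotone_below1.
Qed.

Lemma comp_equiv_monotone : equiv_monotone C.
Proof.
exists monotone_form; split; first exact: monotone_form_monotone.
by split; [apply: le_monotone_form | apply: monotone_form_le].
Qed.

End MonotoneForm.

Lemma passable_equiv_monotone disp (A : tbPOrderType disp) (G : game A) :
  passable G -> equiv_monotone G.
Proof.
elim=> {}G GG _ IH; case: G GG IH => [a _ _ | I J hI hJ L R CC IH].
  by exists (Atom a); split; [apply: monotone_atom | apply: game_equiv_refl].
set C := Comp hI hJ L R in CC IH *.
have /functional_choice[ML ML_spec] : forall i, equiv_monotone (L i).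
  by move=> i; apply: IH; left; exists i.
have /functional_choice[MR MR_spec] : forall j, equiv_monotone (R j).
  by move=> j; apply: IH; right; exists j.
case/game_lfE: CC => [[_ [j <-] RC] | [_ [i <-] CL] | [? [? [//]]]].
- have [monoM [RM MR']] := MR_spec j.
  have MC := game_le_trans MR' RC.
  have CM : game_lf C (MR j) by apply: (game_lf_right (GR := R j)); first exists j.
  apply: (comp_equiv_monotone ML_spec MR_spec monoM MC CM (Q := above1 (MR j))).
  + exact: monotone_above1.
  + exact: le_above1.
  + exact: above1_lf.
- have [monoM [LM ML']] := ML_spec i.
  have CM := game_le_trans CL LM.
  have MC : game_lf (ML i) C by apply: (game_lf_left (HL := L i)); first exists i.
  apply: (comp_equiv_monotone ML_spec MR_spec _ _ _ monoM CM MC (P := below1 (ML i))).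
  + exact: monotone_below1.
  + exact: below1_le.
  + exact: lf_below1.
Qed.

Theorem corollary6p6 (disp : Order.disp_t) (A : tbPOrderType disp)
  (G C : game A) :
  canonical C -> game_equiv C G ->
  ((exists M : game A, monotone M /\ game_equiv G M) <-> passable C).
Proof.
move=> canC CG; split=> [GM | /passable_equiv_monotone CM].
- exact: canonical_equiv_monotone_passable canC (equiv_monotone_equiv CG GM).
- exact: equiv_monotone_equiv (game_equiv_sym CG) CM.
Qed.
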